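(* Let $\Delta$ be a constant, $\delta \in (0,1)$ and $N \geq 1$. Fix a tree $\mathbb{T}$ rooted at $v$ with maximum degree $\Delta$, and let $S = \mathrm{boundary}_{\mathbb{T}, \delta}(v, N)$. Then $|S| \leq T(N) = \widetilde{O}\big(N^{1 - \log \frac{1}{1-\delta}/ \log \frac{\Delta}{1-\delta}}\big)$ and $\mathsf{depth}_{\mathbb{T}}(S) \leq O\big(\log_{\frac{\Delta-1}{1-\delta}}(N)\big)$, where $T(N)$ is the maximum of $|\mathrm{boundary}_{\mathbb{T}', \delta}(v', N)|$ over all trees $\mathbb{T}'$ of maximum degree $\Delta$ and roots $v'$.
   Context: For a rooted tree $\mathbb T$ and $\delta\in(0,1)$, the procedure $\mathrm{boundary}_{\mathbb T,\delta}(u,N)$ is defined recursively: let $C$ be the set of children of $u$ and $d=|C|$; if $N\le1$ return $\{u\}$; else if $C=\emptyset$ return $\emptyset$; else return $\bigcup_{w\in C}\mathrm{boundary}_{\mathbb T_w,\delta}(w,N\cdot\frac{1-\delta}{d})$, where $\mathbb T_w$ is the subtree rooted at $w$. For $S$ a set of vertices, $\mathsf{depth}_{\mathbb T}(S)=\max_{u\in S}\mathrm{dist}_{\mathbb T}(v,u)$ with $v$ the root. $\widetilde O$ and $O$ hide polylogarithmic factors and constants depending on $\Delta,\delta$. *)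

From Stdlib Require Import Reals List.
Import ListNotations.
Open Scope R_scope.

Inductive tree : Type := Node : list tree -> tree.

(* A vertex of a tree is addressed by the path of child indices from the root;
   the root is [] and dist(root, u) = length of u's address. *)
Definition vertex := list nat.

(* boundary_{T,delta}(u, N) for the subtree t rooted at u, returning the
   addresses (relative to u) of the selected vertices. *)
Fixpoint boundary (delta : R) (t : tree) (N : R) {struct t} : list vertex :=
  match t with
  | Node cs =>
    if Rle_dec N 1 then [ [] ]
    else
      match cs with
      | [] => []
      | _ =>
        let d := length cs in
        (fix go (i : nat) (l : list tree) {struct l} : list vertex :=
           match l with
           | [] => []
           | c :: l' =>
               map (cons i) (boundary delta c (N * (1 - delta) / INR d)) ++ go (S i) l'
           end) 0%nat cs
      end
  end.

Definition card (S : list vertex) : nat :=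
  length (nodup (list_eq_dec Nat.eq_dec) S).

Definition depth (S : list vertex) : nat := fold_right Nat.max 0%nat (map (@length nat) S).

Fixpoint children_le (k : nat) (t : tree) {struct t} : Prop :=
  match t with
  | Node cs =>
    (length cs <= k)%nat /\
    (fix F (l : list tree) : Prop :=
       match l with [] => True | c :: l' => children_le k c /\ F l' end) cs
  end.

(* Maximum (graph) degree at most Delta: the root has at most Delta
   neighbours (children), every other vertex has its parent plus at most
   Delta - 1 children. *)
Definition max_degree_le (Delta : nat) (t : tree) : Prop :=
  match t with
  | Node cs => (length cs <= Delta)%nat /\ Forall (children_le (Delta - 1)) cs
  end.

(* Each recursive call multiplies the budget by (1 - δ)/d ≤ 1 - δ, so after
   log_{1/(1-δ)} N levels the budget is at most 1 and the recursion stops.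
   For the size, the exponent p is chosen so that Δ ((1 - δ)/Δ)^p = 1; as
   d ↦ d ((1 - δ)/d)^p is nondecreasing for p ≤ 1, a vertex with d ≤ Δ children
   splits a budget M into d budgets whose p-th powers sum to at most M^p.  Every
   budget that is reached exceeds (1 - δ)/Δ, because its parent's exceeded 1, so
   induction gives |boundary(M)| ≤ (Δ M / (1 - δ))^p: no logarithmic factor is
   needed. *)

From Stdlib Require Import Reals List Lra Lia ZArith.
Import ListNotations.
Open Scope R_scope.

Lemma exp_le_compat x y : x <= y -> exp x <= exp y.
Proof.
  intros [Hxy| ->]; [left; apply exp_increasing; exact Hxy|right; reflexivity].
Qed.

Lemma ln_le_compat x y : 0 < x -> x <= y -> ln x <= ln y.
Proof.
  intros Hx [Hxy| ->]; [left; apply ln_increasing; assumption|right; reflexivity].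
Qed.

Lemma ln_gt_0 x : 1 < x -> 0 < ln x.
Proof. intros Hx; rewrite <- ln_1; apply ln_increasing; lra. Qed.

Lemma ln_div x y : 0 < x -> 0 < y -> ln (x / y) = ln x - ln y.
Proof.
  intros Hx Hy; unfold Rdiv.
  rewrite ln_mult, ln_Rinv; [ring|assumption|assumption|apply Rinv_0_lt_compat, Hy].
Qed.

Lemma Rpower_pos x y : 0 < Rpower x y.
Proof. apply exp_pos. Qed.

Lemma lt_1_div x y : 0 < y < x -> 1 < x / y.
Proof.
  intros Hxy; apply Rmult_lt_reg_r with y; [lra|].
  unfold Rdiv; rewrite Rmult_assoc, Rinv_l; lra.
Qed.

Lemma exists_nat_ceil x : 0 <= x -> exists n, x <= INR n <= x + 1.
Proof.
  intros Hx; destruct (archimed x) as [Hup1 Hup2].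
  exists (Z.to_nat (up x)).
  rewrite INR_IZR_INZ, Z2Nat.id by (apply le_IZR; lra); lra.
Qed.

Lemma ln_inv_1_minus_gt_0 delta : 0 < delta < 1 -> 0 < ln (1 / (1 - delta)).
Proof.
  intros Hdelta; apply ln_gt_0, lt_1_div; lra.
Qed.

Fixpoint tree_nested_ind (P : tree -> Prop)
  (H : forall cs, Forall P cs -> P (Node cs)) (t : tree) : P t :=
  match t with
  | Node cs =>
      H cs ((fix F l : Forall P l :=
               match l with
               | [] => Forall_nil _
               | c :: l' => Forall_cons _ (tree_nested_ind P H c) (F l')
               end) cs)
  end.

Lemma children_le_Node k cs :
  children_le k (Node cs) <-> (length cs <= k)%nat /\ Forall (children_le k) cs.
Proof.
  simpl; apply and_iff_compat_l.
  induction cs as [|c cs IH]; simpl.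
  - split; auto.
  - rewrite Forall_cons_iff, IH; tauto.
Qed.

Lemma children_le_mono k k' t : (k <= k')%nat -> children_le k t -> children_le k' t.
Proof.
  intros Hk; induction t as [cs IH] using tree_nested_ind.
  rewrite !children_le_Node; intros [Hl HF]; split; [lia|].
  rewrite Forall_forall in *; auto.
Qed.

Lemma max_degree_le_children_le Delta t : max_degree_le Delta t -> children_le Delta t.
Proof.
  destruct t as [cs]; intros [Hl HF]; apply children_le_Node; split; [exact Hl|].
  eapply Forall_impl; [|exact HF]; intros c; apply children_le_mono; lia.
Qed.

(* The inner fixpoint of [boundary]; defined in a section so that its body is
   syntactically that of [boundary] and [boundary_Node] holds by conversion. *)
Section BoundaryChildren.
Variable f : tree -> list vertex.

Fixpoint boundary_children (i : nat) (cs : list tree) : list vertex :=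
  match cs with
  | [] => []
  | c :: cs' => map (cons i) (f c) ++ boundary_children (S i) cs'
  end.

End BoundaryChildren.

Lemma boundary_Node delta cs N :
  boundary delta (Node cs) N =
  if Rle_dec N 1 then [ [] ]
  else match cs with
       | [] => []
       | _ => boundary_children
                (fun c => boundary delta c (N * (1 - delta) / INR (length cs))) 0 cs
       end.
Proof. reflexivity. Qed.

Lemma length_boundary_children f i cs K :
  Forall (fun c => INR (length (f c)) <= K) cs ->
  INR (length (boundary_children f i cs)) <= INR (length cs) * K.
Proof.
  revert i; induction cs as [|c cs IH]; intros i H; cbn [boundary_children length].
  - simpl; lra.
  - inversion_clear H as [|? ? Hc Hcs].
    rewrite length_app, length_map, plus_INR, S_INR.
    specialize (IH (S i) Hcs); unfold vertex in *; lra.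
Qed.

Lemma in_boundary_children f i cs v :
  In v (boundary_children f i cs) ->
  exists c j w, In c cs /\ In w (f c) /\ v = j :: w.
Proof.
  revert i; induction cs as [|c cs IH]; intros i Hv; simpl in Hv; [tauto|].
  apply in_app_or in Hv as [Hv|Hv].
  - apply in_map_iff in Hv as [w [<- Hw]]; exists c, i, w; simpl; auto.
  - destruct (IH _ Hv) as (c' & j & w & Hc' & Hw & ->); exists c', j, w; simpl; auto.
Qed.

Lemma depth_le_iff s n :
  (depth s <= n)%nat <-> forall v, In v s -> (length v <= n)%nat.
Proof.
  unfold depth; induction s as [|w s IH]; simpl.
  - split; [tauto|lia].
  - rewrite Nat.max_lub_iff, IH; firstorder congruence.
Qed.

Lemma card_le_length s : (card s <= length s)%nat.
Proof.
  apply NoDup_incl_length; [apply NoDup_nodup|].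
  intros v; apply nodup_In.
Qed.

Lemma depth_boundary_le delta t M n :
  delta <= 1 -> M * (1 - delta) ^ n <= 1 -> (depth (boundary delta t M) <= n)%nat.
Proof.
  intros Hdelta; revert t M; induction n as [|n IH]; intros [cs] M HM;
    rewrite boundary_Node; destruct (Rle_dec M 1) as [HM1|HM1]; try (cbn; lia).
  - simpl in HM; lra.
  - destruct cs as [|c cs']; [cbn; lia|].
    apply depth_le_iff; intros v Hv.
    destruct (in_boundary_children _ _ _ _ Hv) as (x & j & w & _ & Hw & ->).
    clear Hv; apply le_n_S; revert w Hw; apply depth_le_iff, IH.
    set (d := INR (length (c :: cs'))).
    assert (Hd : 1 <= d) by (apply (le_INR 1); simpl; lia).
    assert (Hq : 0 <= M * (1 - delta) ^ S n)
      by (apply Rmult_le_pos; [lra|apply pow_le; lra]).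
    replace (M * (1 - delta) / d * (1 - delta) ^ n) with (M * (1 - delta) ^ S n / d)
      by (simpl; field; lra).
    apply Rle_trans with (M * (1 - delta) ^ S n); [|exact HM].
    apply Rmult_le_reg_r with d; [lra|].
    unfold Rdiv; rewrite Rmult_assoc, Rinv_l by lra; nra.
Qed.

Lemma depth_boundary_le_log delta t N :
  0 < delta < 1 -> 1 <= N ->
  INR (depth (boundary delta t N)) <= ln N / ln (1 / (1 - delta)) + 1.
Proof.
  intros Hdelta HN.
  pose proof (ln_inv_1_minus_gt_0 _ Hdelta) as HA; set (A := ln (1 / (1 - delta))) in *.
  assert (Hlnq : ln (1 - delta) = - A)
    by (unfold A; rewrite ln_div, ln_1 by lra; ring).
  destruct (exists_nat_ceil (ln N / A)) as [n [Hn1 Hn2]].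
  { apply Rmult_le_pos; [rewrite <- ln_1; apply ln_le_compat; lra|].
    left; apply Rinv_0_lt_compat, HA. }
  apply Rle_trans with (INR n); [apply le_INR, depth_boundary_le; [lra|]|lra].
  rewrite <- Rpower_pow, <- (exp_ln N) at 1 by lra.
  unfold Rpower; rewrite Hlnq, <- exp_plus, <- exp_0; apply exp_le_compat.
  apply Rmult_le_compat_r with (r := A) in Hn1; [|lra].
  unfold Rdiv in Hn1; rewrite Rmult_assoc, Rinv_l in Hn1 by lra; lra.
Qed.

Lemma mul_Rpower_div_le q p d d' :
  0 < q -> p <= 1 -> 0 < d <= d' -> d * Rpower (q / d) p <= d' * Rpower (q / d') p.
Proof.
  intros Hq Hp Hd.
  assert (E : forall x, 0 < x -> x * Rpower (q / x) p = exp ((1 - p) * ln x + p * ln q)).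
  { intros x Hx; unfold Rpower; rewrite ln_div by lra.
    rewrite <- (exp_ln x) at 1 by exact Hx; rewrite <- exp_plus; f_equal; ring. }
  rewrite !E by lra; apply exp_le_compat.
  apply Rplus_le_compat_r, Rmult_le_compat_l; [lra|apply ln_le_compat; lra].
Qed.

Section BoundarySize.

Variables (delta p : R) (k : nat).
Hypotheses (delta_lt_1 : delta < 1) (k_gt_0 : (0 < k)%nat) (p_ge_0 : 0 <= p) (p_le_1 : p <= 1).
Hypothesis branching_le_1 : INR k * Rpower ((1 - delta) / INR k) p <= 1.

Lemma mul_Rpower_split_le d M :
  1 <= d <= INR k -> 0 < M -> d * Rpower (M * (1 - delta) / d) p <= Rpower M p.
Proof.
  intros Hd HM.
  assert (Hsplit : Rpower (M * (1 - delta) / d) p = Rpower M p * Rpower ((1 - delta) / d) p).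
  { unfold Rdiv; rewrite Rmult_assoc, Rpower_mult_distr; [reflexivity|exact HM|].
    apply Rdiv_lt_0_compat; lra. }
  rewrite Hsplit.
  replace (d * (Rpower M p * Rpower ((1 - delta) / d) p))
    with (Rpower M p * (d * Rpower ((1 - delta) / d) p)) by ring.
  rewrite <- (Rmult_1_r (Rpower M p)) at 2.
  apply Rmult_le_compat_l; [left; apply Rpower_pos|].
  apply Rle_trans with (2 := branching_le_1), mul_Rpower_div_le; lra.
Qed.

Lemma length_boundary_le t M :
  children_le k t -> (1 - delta) / INR k < M ->
  INR (length (boundary delta t M)) <= Rpower (INR k / (1 - delta)) p * Rpower M p.
Proof.
  assert (Hk : 0 < INR k) by (apply lt_0_INR; exact k_gt_0).
  assert (Hqk : 0 < (1 - delta) / INR k) by (apply Rdiv_lt_0_compat; lra).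
  revert M; induction t as [cs IH] using tree_nested_ind; intros M Hcl HM.
  apply children_le_Node in Hcl as [Hl HF].
  rewrite boundary_Node; destruct (Rle_dec M 1) as [HM1|HM1].
  - cbn [length INR].
    assert (Hkq : 0 < INR k / (1 - delta)) by (apply Rdiv_lt_0_compat; lra).
    rewrite Rpower_mult_distr by lra.
    apply Rle_trans with (Rpower (INR k / (1 - delta) * M) 0); [rewrite Rpower_O; nra|].
    apply Rle_Rpower; [|exact p_ge_0].
    apply Rle_trans with (INR k / (1 - delta) * ((1 - delta) / INR k));
      [right; field; lra|apply Rmult_le_compat_l; lra].
  - destruct cs as [|c cs']; [cbn; left; apply Rmult_lt_0_compat; apply Rpower_pos|].
    set (d := INR (length (c :: cs'))).
    assert (Hd : 1 <= d <= INR k) by (split; [apply (le_INR 1); simpl; lia|apply le_INR, Hl]).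
    apply Rle_trans with (d * (Rpower (INR k / (1 - delta)) p * Rpower (M * (1 - delta) / d) p)).
    + apply length_boundary_children, Forall_forall; intros x Hx.
      rewrite Forall_forall in IH, HF; apply IH; [auto|auto|].
      assert (Hqd : 0 < (1 - delta) / d) by (apply Rdiv_lt_0_compat; lra).
      apply Rle_lt_trans with ((1 - delta) / d).
      * unfold Rdiv; apply Rmult_le_compat_l; [lra|apply Rinv_le_contravar; lra].
      * replace (M * (1 - delta) / d) with (M * ((1 - delta) / d)) by (unfold Rdiv; ring).
        nra.
    + rewrite Rmult_comm, Rmult_assoc.
      apply Rmult_le_compat_l; [left; apply Rpower_pos|].
      rewrite Rmult_comm; apply mul_Rpower_split_le; lra.
Qed.

End BoundarySize.

Definition boundary_exponent (Delta : nat) (delta : R) : R :=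
  1 - ln (1 / (1 - delta)) / ln (INR Delta / (1 - delta)).

Section BoundaryExponent.

Variables (Delta : nat) (delta : R).
Hypotheses (Delta_ge_1 : (1 <= Delta)%nat) (delta_in_01 : 0 < delta < 1).

Lemma ln_div_1_minus_split :
  ln (INR Delta / (1 - delta)) = ln (INR Delta) + ln (1 / (1 - delta)).
Proof.
  assert (HD : 1 <= INR Delta) by (apply (le_INR 1), Delta_ge_1).
  rewrite !ln_div, ln_1 by lra; ring.
Qed.

Lemma boundary_exponent_bounds : 0 <= boundary_exponent Delta delta <= 1.
Proof.
  assert (HD : 0 <= ln (INR Delta))
    by (rewrite <- ln_1; apply ln_le_compat, (le_INR 1), Delta_ge_1; lra).
  pose proof (ln_inv_1_minus_gt_0 _ delta_in_01) as HA.
  unfold boundary_exponent; rewrite ln_div_1_minus_split.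
  set (A := ln (1 / (1 - delta))) in *; set (B := ln (INR Delta)) in *.
  set (r := A / (B + A)).
  assert (Hr : r * (B + A) = A) by (unfold r; field; lra).
  split; nra.
Qed.

Lemma boundary_exponent_balanced :
  INR Delta * Rpower ((1 - delta) / INR Delta) (boundary_exponent Delta delta) = 1.
Proof.
  assert (HD : 1 <= INR Delta) by (apply (le_INR 1), Delta_ge_1).
  pose proof (ln_inv_1_minus_gt_0 _ delta_in_01) as HA.
  assert (Hlog : ln ((1 - delta) / INR Delta) = - ln (INR Delta / (1 - delta)))
    by (rewrite !ln_div by lra; ring).
  unfold Rpower; rewrite <- (exp_ln (INR Delta)) at 1 by lra; rewrite <- exp_plus.
  transitivity (exp 0); [f_equal|apply exp_0].
  unfold boundary_exponent; rewrite Hlog, ln_div_1_minus_split.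
  assert (0 <= ln (INR Delta)) by (rewrite <- ln_1; apply ln_le_compat; lra).
  field; lra.
Qed.

End BoundaryExponent.

Lemma length_boundary_le_exponent Delta delta t N :
  (1 <= Delta)%nat -> 0 < delta < 1 -> children_le Delta t -> 1 <= N ->
  INR (length (boundary delta t N))
    <= Rpower (INR Delta / (1 - delta)) (boundary_exponent Delta delta)
       * Rpower N (boundary_exponent Delta delta).
Proof.
  intros HDelta Hdelta Ht HN.
  pose proof (boundary_exponent_bounds Delta delta HDelta Hdelta) as Hp.
  assert (HD : 1 <= INR Delta) by (apply (le_INR 1), HDelta).
  apply length_boundary_le; [lra|exact HDelta|lra|lra| |exact Ht|].
  - rewrite boundary_exponent_balanced by assumption; lra.
  - apply Rle_lt_trans with (1 - delta); [|lra].
    apply Rmult_le_reg_r with (INR Delta); [lra|].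
    unfold Rdiv; rewrite Rmult_assoc, Rinv_l by lra; nra.
Qed.

Theorem proposition3p6 (Delta : nat) (delta : R) :
  (2 <= Delta)%nat -> 0 < delta < 1 ->
  exists (C : R) (k : nat) (N0 : R),
    0 < C /\
    forall (t : tree) (N : R),
      max_degree_le Delta t -> 1 <= N -> N0 <= N ->
      INR (card (boundary delta t N))
        <= C * Rpower N (1 - ln (1 / (1 - delta)) / ln (INR Delta / (1 - delta)))
             * (ln N) ^ k
      /\
      INR (depth (boundary delta t N))
        <= C * (ln N / ln ((INR Delta - 1) / (1 - delta))).
Proof.
  intros HDelta Hdelta.
  assert (HD : 2 <= INR Delta) by (apply (le_INR 2), HDelta).
  fold (boundary_exponent Delta delta); set (p := boundary_exponent Delta delta).
  pose proof (ln_inv_1_minus_gt_0 _ Hdelta) as HA; set (A := ln (1 / (1 - delta))) in *.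
  set (L := ln ((INR Delta - 1) / (1 - delta))).
  assert (HL : 0 < L) by (apply ln_gt_0, lt_1_div; lra).
  set (c := Rpower (INR Delta / (1 - delta)) p).
  exists (c + (1 / A + 1) * L), 0%nat, (exp 1).
  assert (Hc : 0 < c) by apply Rpower_pos.
  assert (HA' : 0 < 1 / A) by (apply Rdiv_lt_0_compat; lra).
  split; [nra|intros t N Hdeg HN1 HNe].
  assert (HlnN : 1 <= ln N)
    by (rewrite <- (ln_exp 1); apply ln_le_compat; [apply exp_pos|exact HNe]).
  assert (HK : 0 <= (1 / A + 1) * L) by nra.
  split.
  - apply Rle_trans with (INR (length (boundary delta t N))); [apply le_INR, card_le_length|].
    apply Rle_trans with (c * Rpower N p).
    + apply length_boundary_le_exponent; [lia|exact Hdelta| |exact HN1].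
      apply max_degree_le_children_le, Hdeg.
    + pose proof (Rpower_pos N p); simpl pow; nra.
  - (* the factor L converts ln N / A + 1 <= (1 / A + 1) ln N to base (Δ - 1)/(1 - δ) *)
    apply Rle_trans with (1 := depth_boundary_le_log delta t N Hdelta HN1); fold A.
    replace ((c + (1 / A + 1) * L) * (ln N / L)) with (c * (ln N / L) + (1 / A + 1) * ln N)
      by (field; lra).
    assert (0 <= c * (ln N / L)) by (apply Rmult_le_pos; [lra|left; apply Rdiv_lt_0_compat; lra]).
    unfold Rdiv at 1; nra.
Qed.
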